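(* Let $n\ge 1$ and let $\mathcal{A}\subseteq \mathcal{S}\times\mathcal{X}^n$ be a nonempty set of input pairs. The following are equivalent: (a) $d_n\big((s_0,\mathbf{x}),(\hat s_0,\hat{\mathbf{x}})\big)\le \beta$ for all $(s_0,\mathbf{x}),(\hat s_0,\hat{\mathbf{x}})\in\mathcal{A}$; (b) there exists a single sequence $\mathbf{y}_{\mathcal{A}}\in\mathbb{Z}^n$ with $\mathbf{y}_{\mathcal{A}}\in \bigcap_{(s_0,\mathbf{x})\in\mathcal{A}} \mathcal{Y}^n(s_0,\mathbf{x})$, where the feasible sets are taken with output alphabet $\mathcal{Y}=\mathbb{Z}$.
   Context: Fix integers $\alpha\ge 1$ (maximal consumption per step) and $\beta\ge 0$ (battery capacity). Let $\mathcal{X}=\{0,1,\dots,\alpha\}$ and $\mathcal{S}=\{0,1,\dots,\beta\}$. For an initial battery state $s_0\in\mathcal{S}$, a consumption sequence $\mathbf{x}=(x_0,\dots,x_{n-1})\in\mathcal{X}^n$ and a request sequence $\mathbf{y}=(y_0,\dots,y_{n-1})\in\mathbb{Z}^n$, the battery states are $s_i=s_0+\sum_{k=0}^{i-1}y_k-\sum_{k=0}^{i-1}x_k$ for $i=0,1,\dots,n$. For an output alphabet $\mathcal{Y}\subseteq\mathbb{Z}$, the set of feasible requests is $\mathcal{Y}^n(s_0,\mathbf{x})=\{\mathbf{y}\in\mathcal{Y}^n: s_i\in\{0,\dots,\beta\}\text{ for all } i=0,\dots,n\}$. The distance between two input pairs is $d_n\big((s_0,\mathbf{x}),(\hat s_0,\hat{\mathbf{x}})\big)=\max_{0\le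 i\le n-1}\big|(s_0-\sum_{k=0}^{i}x_k)-(\hat s_0-\sum_{k=0}^{i}\hat x_k)\big|$. *)

From Stdlib Require Import ZArith List Lia.
Import ListNotations.
Open Scope Z_scope.

Definition psum (v : list Z) (i : nat) : Z := fold_right Z.add 0 (firstn i v).

Definition state (s0 : Z) (x y : list Z) (i : nat) : Z := s0 + psum y i - psum x i.

Definition valid_input (alpha beta : Z) (n : nat) (s0 : Z) (x : list Z) : Prop :=
  0 <= s0 <= beta /\ length x = n /\ Forall (fun xk => 0 <= xk <= alpha) x.

Definition feasible (beta : Z) (n : nat) (s0 : Z) (x y : list Z) : Prop :=
  length y = n /\ forall i : nat, (i <= n)%nat -> 0 <= state s0 x y i <= beta.

(* d_n((s0,x),(s0',x')) = max_{0<=i<=n-1} |(s0 - sum_{k<=i} x_k) - (s0' - sum_{k<=i} x'_k)| ;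
   the fold starting at 0 is harmless since absolute values are >= 0 and n >= 1. *)
Definition dist_n (n : nat) (s0 : Z) (x : list Z) (s0' : Z) (x' : list Z) : Z :=
  fold_right Z.max 0
    (map (fun i => Z.abs ((s0 - psum x (S i)) - (s0' - psum x' (S i)))) (seq 0 n)).

From Stdlib Require Import ZArith List Lia Classical.
Import ListNotations.
Open Scope Z_scope.

(* Write  level s0 x i = s0 - (x_0 + ... + x_i)  for the battery
   level after the first i+1 consumptions when nothing is requested.  Then the
   state after step i+1 is  level s0 x i + (y_0 + ... + y_i), and d_n is the
   largest difference between the levels of two inputs at a common time i < n.
   (b) => (a): a common feasible y puts, at each time i, every level of A into
   the window [-Y, beta - Y] with Y = y_0 + ... + y_i, so levels differ by at
   most beta.
   (a) => (b): at each time i the levels of A form a nonempty set of integers of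
   diameter at most beta; such a set has a maximum M and the shift t = beta - M
   moves it into [0, beta].  Any targets t_0, ..., t_{n-1} are the prefix sums
   of some sequence y, which is then feasible for every input of A. *)

Lemma psum_app (l1 l2 : list Z) (i : nat) :
  psum (l1 ++ l2) i = psum l1 i + psum l2 (i - length l1).
Proof.
  assert (acc : forall l a, fold_right Z.add a l = fold_right Z.add 0 l + a).
  { induction l; simpl; intros; [lia | rewrite IHl; lia]. }
  unfold psum. rewrite firstn_app, fold_right_app, acc. lia.
Qed.

Lemma psum_snoc (y : list Z) (a : Z) :
  psum (y ++ [a]) (S (length y)) = psum y (length y) + a.
Proof.
  rewrite psum_app, Nat.sub_succ_l, Nat.sub_diag by lia.
  unfold psum. rewrite !firstn_all2 by (simpl; lia). simpl. lia.
Qed.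

Lemma psum_app_prefix (y l : list Z) (i : nat) :
  (i <= length y)%nat -> psum (y ++ l) i = psum y i.
Proof.
  intros Hi. rewrite psum_app. replace (i - length y)%nat with 0%nat by lia.
  unfold psum at 2. simpl. lia.
Qed.

Lemma prefix_sums_realizable (n : nat) (P : nat -> Z -> Prop) :
  (forall i, (i < n)%nat -> exists t, P i t) ->
  exists y : list Z, length y = n /\ forall i, (i < n)%nat -> P i (psum y (S i)).
Proof.
  induction n as [|n IH]; intros HP.
  - exists []. split; [reflexivity | intros; lia].
  - destruct IH as [y [Hy HyP]]; [intros i Hi; apply HP; lia |].
    destruct (HP n (Nat.lt_succ_diag_r n)) as [t Ht].
    exists (y ++ [t - psum y n]). split.
    + rewrite length_app, Hy. simpl. lia.
    + intros i Hi. destruct (Nat.eq_dec i n) as [-> | Hne].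
      * rewrite <- Hy, psum_snoc, Hy. replace (psum y n + (t - psum y n)) with t by lia.
        exact Ht.
      * rewrite psum_app_prefix by lia. apply HyP. lia.
Qed.

Lemma Z_max_exists (P : Z -> Prop) (U : Z) :
  (exists z, P z) -> (forall z, P z -> z <= U) ->
  exists M, P M /\ forall z, P z -> z <= M.
Proof.
  intros [z0 Hz0] HU.
  assert (by_gap : forall k z, P z -> (Z.to_nat (U - z) <= k)%nat ->
            exists M, P M /\ forall z, P z -> z <= M).
  { induction k as [|k IH]; intros z Hz Hk.
    - exists z. split; [exact Hz |]. intros z' Hz'. specialize (HU z' Hz'). lia.
    - destruct (classic (exists z', P z' /\ z < z')) as [[z' [Hz' Hlt]] | Hnone].
      + apply (IH z' Hz'). specialize (HU z' Hz'). lia.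
      + exists z. split; [exact Hz |]. intros z' Hz'.
        apply Z.nlt_ge. intros Hlt. apply Hnone. eauto. }
  exact (by_gap _ z0 Hz0 (le_n _)).
Qed.

(* A nonempty set of integers of diameter at most beta can be translated into
   the window [0, beta]: translate its maximum to beta. *)
Lemma shift_into_window (P : Z -> Prop) (beta : Z) :
  (exists z, P z) -> (forall z z', P z -> P z' -> z' - z <= beta) ->
  exists t, forall z, P z -> 0 <= z + t <= beta.
Proof.
  intros [z0 Hz0] Hdiam.
  destruct (Z_max_exists P (z0 + beta)) as [M [HM HMmax]].
  - eauto.
  - intros z Hz. specialize (Hdiam z0 z Hz0 Hz). lia.
  - exists (beta - M). intros z Hz.
    specialize (HMmax z Hz). specialize (Hdiam z M Hz HM). lia.
Qed.

Definition level (s0 : Z) (x : list Z) (i : nat) : Z := s0 - psum x (S i).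

Lemma state_0 (s0 : Z) (x y : list Z) : state s0 x y 0 = s0.
Proof. unfold state, psum. simpl. lia. Qed.

Lemma state_S (s0 : Z) (x y : list Z) (i : nat) :
  state s0 x y (S i) = level s0 x i + psum y (S i).
Proof. unfold state, level. lia. Qed.

Lemma fold_max_ge (l : list Z) (a : Z) : In a l -> a <= fold_right Z.max 0 l.
Proof.
  induction l as [|b l IH]; simpl; [tauto |].
  intros [-> | Ha]; [lia | specialize (IH Ha); lia].
Qed.

Lemma fold_max_le (l : list Z) (B : Z) :
  0 <= B -> (forall a, In a l -> a <= B) -> fold_right Z.max 0 l <= B.
Proof.
  intros HB. induction l as [|b l IH]; simpl; intros Hl; [lia |].
  assert (fold_right Z.max 0 l <= B) by (apply IH; auto).
  specialize (Hl b (or_introl eq_refl)). lia.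
Qed.

Lemma dist_n_ge (n : nat) (s0 : Z) (x : list Z) (s0' : Z) (x' : list Z) (i : nat) :
  (i < n)%nat -> Z.abs (level s0 x i - level s0' x' i) <= dist_n n s0 x s0' x'.
Proof.
  intros Hi. apply fold_max_ge, in_map_iff.
  exists i. split; [reflexivity | apply in_seq; lia].
Qed.

Lemma dist_n_le (n : nat) (s0 : Z) (x : list Z) (s0' : Z) (x' : list Z) (B : Z) :
  0 <= B -> (forall i, (i < n)%nat -> Z.abs (level s0 x i - level s0' x' i) <= B) ->
  dist_n n s0 x s0' x' <= B.
Proof.
  intros HB Hlev. apply fold_max_le; [exact HB |].
  intros a Ha. apply in_map_iff in Ha. destruct Ha as [i [<- Hi]].
  apply in_seq in Hi. apply Hlev. lia.
Qed.

Theorem lemma1 (alpha beta : Z) (n : nat) (A : Z -> list Z -> Prop) :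
  1 <= alpha -> 0 <= beta -> (1 <= n)%nat ->
  (forall s0 x, A s0 x -> valid_input alpha beta n s0 x) ->
  (exists s0 x, A s0 x) ->
  ((forall s0 x s0' x', A s0 x -> A s0' x' -> dist_n n s0 x s0' x' <= beta)
   <->
   (exists y : list Z, length y = n /\
      forall s0 x, A s0 x -> feasible beta n s0 x y)).
Proof.
  intros _ Hbeta _ Hvalid [s1 [x1 HA1]]. split.
  - intros Hdist.
    destruct (prefix_sums_realizable n
                (fun i t => forall s0 x, A s0 x -> 0 <= level s0 x i + t <= beta))
      as [y [Hy Hfeas]].
    { intros i Hi.
      destruct (shift_into_window (fun z => exists s0 x, A s0 x /\ z = level s0 x i) beta)
        as [t Ht].
      - eauto.
      - intros z z' [s0 [x [HA ->]]] [s0' [x' [HA' ->]]].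
        pose proof (dist_n_ge n s0 x s0' x' i Hi). specialize (Hdist _ _ _ _ HA HA'). lia.
      - exists t. intros s0 x HA. apply Ht. eauto. }
    exists y. split; [exact Hy |]. intros s0 x HA. split; [exact Hy |].
    intros [|i] Hi.
    + rewrite state_0. apply (Hvalid _ _ HA).
    + rewrite state_S. apply Hfeas; [lia | exact HA].
  - intros [y [_ Hfeas]] s0 x s0' x' HA HA'. apply dist_n_le; [exact Hbeta |].
    intros i Hi.
    destruct (Hfeas _ _ HA) as [_ Hs]. destruct (Hfeas _ _ HA') as [_ Hs'].
    specialize (Hs (S i) ltac:(lia)). specialize (Hs' (S i) ltac:(lia)).
    rewrite state_S in Hs, Hs'. lia.
Qed.
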